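(* Let $G$ be a finite group and $H$ a subgroup such that $\mathcal{O}_G(H)$ is Boolean of rank $2$ with coatoms $M_1,M_2$. Then $|M_1:H|=2$ if and only if $|G:M_2|=2$.
   Context: $\mathcal{O}_G(H)=\{K\mid H\le K\le G\}$; Boolean of rank $2$ means isomorphic to the lattice of subsets of a $2$-element set; coatoms are the maximal elements of $\mathcal{O}_G(H)\setminus\{G\}$. *)

From mathcomp Require Import all_boot all_order all_fingroup.
Set Implicit Arguments. Unset Strict Implicit. Unset Printing Implicit Defensive.
Local Open Scope group_scope.

Definition overgroups (gT : finGroupType) (H G : {group gT}) : {set {group gT}} :=
  [set K : {group gT} | (H \subset K) && (K \subset G)].

Definition boolean_rank2 (gT : finGroupType) (H G : {group gT}) : Prop :=
  exists f : {group gT} -> {set 'I_2},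
    [/\ {in overgroups H G &, injective f},
        f @: overgroups H G = [set: {set 'I_2}] &
        {in overgroups H G &, forall K L : {group gT}, (K \subset L) = (f K \subset f L)}].

Definition coatom (gT : finGroupType) (H G K : {group gT}) : Prop :=
  [/\ K \in overgroups H G, K != G &
      forall L : {group gT}, L \in overgroups H G -> L != G ->
        K \subset L -> L = K].

(** A Boolean lattice of rank 2 has exactly four elements, so the overgroups
    of H in G are H, M1, M2 and G, with M1 :&: M2 = H and M1 <*> M2 = G.
    If M1 normalizes M2 then M1 * M2 = G, whence
    #|M1 : H| = #|M1 : M1 :&: M2| = #|M1 * M2 : M2| = #|G : M2|.
    If #|G : M2| = 2 then M2 is normal in G, so M1 normalizes it.
    If #|M1 : H| = 2 then H is normal in M1, so every M1-conjugate of M2 is an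
    overgroup of H of order #|M2|; the only such overgroup is M2 itself. *)

From mathcomp Require Import all_boot all_order all_fingroup.
Set Implicit Arguments.
Unset Strict Implicit.
Local Open Scope group_scope.

Lemma eq_set_ord2 (c d : {set 'I_2}) :
  (c == d) = ((ord0 \in c) == (ord0 \in d)) && ((ord_max \in c) == (ord_max \in d)).
Proof.
apply/eqP/andP => [-> // | [/eqP e0 /eqP e1]]; apply/setP => -[[|[|//]] lti].
- by rewrite (_ : Ordinal lti = ord0) //; apply: val_inj.
- by rewrite (_ : Ordinal lti = ord_max) //; apply: val_inj.
Qed.

Lemma set_ord2_compl (a b : {set 'I_2}) :
  a != set0 -> a != setT -> b != set0 -> b != setT -> a != b -> b = ~: a.
Proof.
move=> a0 aT b0 bT ab; apply/eqP; move: a0 aT b0 bT ab.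
rewrite !eq_set_ord2 !inE.
by case: (ord0 \in a); case: (ord_max \in a); case: (ord0 \in b); case: (ord_max \in b).
Qed.

Lemma set_ord2_cases (a c : {set 'I_2}) : a != set0 -> a != setT ->
  [\/ c = set0, c = a, c = ~: a | c = setT].
Proof.
move=> a0 aT; suff : [|| c == set0, c == a, c == ~: a | c == setT].
  by case/or4P=> /eqP; [constructor 1 | constructor 2 | constructor 3 | constructor 4].
move: a0 aT; rewrite !eq_set_ord2 !inE.
by case: (ord0 \in a); case: (ord_max \in a); case: (ord0 \in c); case: (ord_max \in c).
Qed.

Section BooleanRank2Overgroups.

Variables (gT : finGroupType) (G H : {group gT}) (f : {group gT} -> {set 'I_2}).
Hypothesis sHG : H \subset G.
Hypothesis f_inj : {in overgroups H G &, injective f}.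
Hypothesis f_onto : f @: overgroups H G = [set: {set 'I_2}].
Hypothesis f_mono :
  {in overgroups H G &, forall K L : {group gT}, (K \subset L) = (f K \subset f L)}.

Lemma overgroupsP (K : {group gT}) :
  reflect (H \subset K /\ K \subset G) (K \in overgroups H G).
Proof. by rewrite inE; apply: andP. Qed.

Lemma overgroups_bottom : H \in overgroups H G.
Proof. by apply/overgroupsP. Qed.

Lemma overgroups_top : G \in overgroups H G.
Proof. by apply/overgroupsP. Qed.

Lemma f_surj (c : {set 'I_2}) : exists2 K, K \in overgroups H G & f K = c.
Proof.
have /imsetP[K OK ->] : c \in f @: overgroups H G by rewrite f_onto inE.
by exists K.
Qed.

Lemma f_bottom : f H = set0.
Proof.
have [K /[dup] OK /overgroupsP[sHK _] fK0] := f_surj set0.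
by apply/eqP; rewrite -subset0 -fK0 -f_mono // overgroups_bottom.
Qed.

Lemma f_top : f G = setT.
Proof.
have [K /[dup] OK /overgroupsP[_ sKG] fKT] := f_surj setT.
by apply/eqP; rewrite eqEsubset subsetT -fKT -f_mono // overgroups_top.
Qed.

Lemma f_coatom (M : {group gT}) : coatom H G M -> f M != set0 /\ f M != setT.
Proof.
case=> OM MG Mmax; split; last first.
  by apply: contra MG => /eqP fMT; apply/eqP/f_inj; rewrite ?fMT ?f_top ?overgroups_top.
apply/eqP=> fM0.
have eMH : M = H by apply: f_inj; rewrite ?fM0 ?f_bottom ?overgroups_bottom.
have [K /[dup] OK /overgroupsP[sHK _] fK] := f_surj [set ord0].
have KG : K != G by apply/eqP=> eKG; move/eqP: fK; rewrite eKG f_top eq_set_ord2 !inE.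
move: fK; rewrite (Mmax K) ?eMH // f_bottom => /eqP.
by rewrite eq_set_ord2 !inE.
Qed.

Variables M1 M2 : {group gT}.
Hypotheses (M1coatom : coatom H G M1) (M2coatom : coatom H G M2) (neqM12 : M1 != M2).

Let OM1 : M1 \in overgroups H G. Proof. by case: M1coatom. Qed.
Let OM2 : M2 \in overgroups H G. Proof. by case: M2coatom. Qed.

Lemma f_coatoms_compl : f M2 = ~: f M1.
Proof.
have [[a0 aT] [b0 bT]] := (f_coatom M1coatom, f_coatom M2coatom).
by apply: set_ord2_compl; rewrite // (inj_in_eq f_inj).
Qed.

Lemma overgroups_cases (K : {group gT}) : K \in overgroups H G ->
  [\/ K = H, K = M1, K = M2 | K = G].
Proof.
have [a0 aT] := f_coatom M1coatom.
move=> OK; case: (set_ord2_cases (f K) a0 aT); rewrite -?f_coatoms_compl => fK.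
- by constructor 1; apply: f_inj; rewrite ?f_bottom ?overgroups_bottom.
- by constructor 2; apply: f_inj.
- by constructor 3; apply: f_inj.
- by constructor 4; apply: f_inj; rewrite ?f_top ?overgroups_top.
Qed.

Lemma coatoms_meet : M1 :&: M2 = H.
Proof.
have [/overgroupsP[sHM1 sM1G] /overgroupsP[sHM2 _]] := (OM1, OM2).
have OI : (M1 :&: M2)%G \in overgroups H G.
  by apply/overgroupsP; rewrite subsetI sHM1 sHM2 (subset_trans (subsetIl _ _) sM1G).
suff : f (M1 :&: M2)%G = f H by move/(f_inj OI overgroups_bottom)/(congr1 val).
apply/eqP; rewrite f_bottom -subset0 -(setICr (f M1)) -f_coatoms_compl subsetI.
by rewrite -!f_mono ?subsetIl ?subsetIr.
Qed.

Lemma coatoms_join : M1 <*> M2 = G.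
Proof.
have [/overgroupsP[sHM1 sM1G] /overgroupsP[_ sM2G]] := (OM1, OM2).
have OJ : (M1 <*> M2)%G \in overgroups H G.
  by apply/overgroupsP; rewrite join_subG sM1G sM2G (subset_trans sHM1 (joing_subl _ _)).
suff : f (M1 <*> M2)%G = f G by move/(f_inj OJ overgroups_top)/(congr1 val).
apply/eqP; rewrite f_top eqEsubset subsetT -(setUCr (f M1)) -f_coatoms_compl.
by rewrite subUset -!f_mono ?joing_subl ?joing_subr.
Qed.

Lemma index_coatoms_normalizing : M1 \subset 'N(M2) -> #|M1 : H| = #|G : M2|.
Proof.
move=> nM2M1.
by rewrite -coatoms_meet indexgI -indexMg -norm_joinEr // joingC coatoms_join.
Qed.

Lemma coatom_normalized : M1 \subset 'N(H) -> M1 \subset 'N(M2).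
Proof.
have /overgroupsP[sHM2 sM2G] := OM2.
have /overgroupsP[_ sM1G] := OM1.
move=> nHM1; apply/subsetP=> x M1x; apply/normP.
have OM2x : (M2 :^ x)%G \in overgroups H G.
  apply/overgroupsP; split; first by rewrite -(normP (subsetP nHM1 x M1x)) conjSg.
  by rewrite -(conjGid (subsetP sM1G x M1x)) conjSg.
have cardM2x : #|M2 :^ x| = #|M2| by rewrite cardJg.
case: (overgroups_cases OM2x) => /(congr1 val) /= eM2x.
- have eM2H : M2 = H.
    by apply/val_inj/eqP => /=; rewrite eq_sym eqEcard sHM2 -eM2x cardM2x leqnn.
  by have [] := f_coatom M2coatom; rewrite eM2H f_bottom eqxx.
- case/negP: neqM12; apply/eqP/val_inj => /=.
  by rewrite -(conjGid (groupVr M1x)) -eM2x conjsgK.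
- by [].
- case: M2coatom => _ /negP[]; apply/eqP/val_inj/eqP => /=.
  by rewrite eqEcard sM2G -eM2x cardM2x leqnn.
Qed.

End BooleanRank2Overgroups.

Theorem lemma10p7 (gT : finGroupType) (G H M1 M2 : {group gT}) :
  H \subset G ->
  boolean_rank2 H G ->
  M1 != M2 -> coatom H G M1 -> coatom H G M2 ->
  (#|M1 : H| = 2 <-> #|G : M2| = 2).
Proof.
move=> sHG [f [f_inj f_onto f_mono]] neqM12 M1coatom M2coatom.
have index_eq :=
  index_coatoms_normalizing sHG f_inj f_onto f_mono M1coatom M2coatom neqM12.
have M2_normalized :=
  coatom_normalized sHG f_inj f_onto f_mono M1coatom M2coatom neqM12.
have [[/overgroupsP[sHM1 sM1G] _ _] [/overgroupsP[_ sM2G] _ _]] := (M1coatom, M2coatom).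
split=> idx2.
- rewrite -index_eq //; apply: M2_normalized.
  exact: normal_norm (index2_normal sHM1 idx2).
- rewrite index_eq //.
  exact: subset_trans sM1G (normal_norm (index2_normal sM2G idx2)).
Qed.
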